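(* The algorithm \textsc{Arrows} described in the context can be implemented so that its total running time over the horizon $t=1,\dots,n$ is $O(n\log n)$.
   Context: Haar transform: for $k$ a power of $2$, $H\in\mathbb{R}^{k\times k}$ is the orthonormal discrete Haar wavelet transform: $(Hv)_1=k^{-1/2}\sum_i v_i$, and for each level $l=0,\dots,\log_2k-1$ and $j=1,\dots,2^l$, splitting the block $\{(j-1)k/2^l+1,\dots,jk/2^l\}$ into first half $I^-$ and second half $I^+$, there is a coefficient $(\sum_{I^+}v_i-\sum_{I^-}v_i)/\sqrt{k/2^l}$; the level-$l$ coefficients form the block $\alpha[l]\in\mathbb{R}^{2^l}$. $pad_0(y_a,\dots,y_b)$ is $(y_a-\bar y_{a:b},\dots,y_b-\bar y_{a:b})$ ($\bar y_{a:b}$ the average) followed by zeros up to length $k$, the smallest power of $2$ $\ge b-a+1$. $T$ is coordinatewise soft thresholding at level $\sigma\sqrt{\beta\log n}$. Algorithm \textsc{Arrows} (inputs: horizon $n$, $\sigma>0$, $\delta\in(0,1]$, $\beta>24$; observations $y_1,\dots,y_n$ arrive online): set $t_h=1$, $newBin=1$, $y_0=0$. For $t=1,\dots,n$: if $newBin=1$ predict $x_t=y_{t-1}$, else $x_t=\bar y_{t_h:t-1}$; set $newBin=0$, observe $y_t$; let $\tilde y=pad_0(y_{t_h},\dots,y_t)$ with length $k$ and $\hat\alpha=T(H\tilde y)$; if $\frac{1}{\sqrt k}\sum_{l=0}^{\log_2k-1}2^{l/2}\|\hat\alpha[l]\|_1>\frac{\sigma}{\sqrt k}$ then set $newBin=1$,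 $t_h=t+1$. *)

From Stdlib Require Import Reals List Lia.
Import ListNotations.
Open Scope R_scope.

(*  Specification of ARROWS (indices of observations are 1-based,   *)
(*  y_0 := 0; padded vectors are indexed 0..k-1).                   *)

Definition sumR (f : nat -> R) (a len : nat) : R :=
  fold_right (fun i acc => f i + acc) 0 (seq a len).

Definition y0 (y : nat -> R) (i : nat) : R := if Nat.eqb i 0 then 0 else y i.

Definition meanR (y : nat -> R) (a b : nat) : R :=
  sumR (y0 y) a (b - a + 1) / INR (b - a + 1).

Definition pad_exp (a b : nat) : nat := Nat.log2_up (b - a + 1).

Definition pad0 (y : nat -> R) (a b : nat) (i : nat) : R :=
  if Nat.ltb i (b - a + 1) then y0 y (a + i) - meanR y a b else 0.

(* Haar detail coefficient of a vector v of length k = 2^m, at level l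
   (0 <= l < m) and block j (0-based, 0 <= j < 2^l): the block has size
   s = k/2^l = 2^(m-l); coefficient = (sum_{I+} v - sum_{I-} v)/sqrt s. *)
Definition haar_detail (m : nat) (v : nat -> R) (l j : nat) : R :=
  let s := (2 ^ (m - l))%nat in
  let st := (j * s)%nat in
  (sumR v (st + Nat.div s 2) (Nat.div s 2) - sumR v st (Nat.div s 2)) / sqrt (INR s).

Definition soft (lam x : R) : R :=
  if Rlt_dec lam x then x - lam else if Rlt_dec x (- lam) then x + lam else 0.

Definition arrows_test (sigma beta : R) (n : nat) (y : nat -> R) (a b : nat) : bool :=
  let m := pad_exp a b in
  let k := (2 ^ m)%nat in
  let v := pad0 y a b in
  let lam := sigma * sqrt (beta * ln (INR n)) in
  let lhs := (1 / sqrt (INR k)) *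
             sumR (fun l => sqrt (2 ^ l) *
                     sumR (fun j => Rabs (soft lam (haar_detail m v l j))) 0 (2 ^ l))
                  0 m in
  if Rlt_dec (sigma / sqrt (INR k)) lhs then true else false.

(* state (t_h, newBin) after processing steps 1..t *)
Fixpoint arrows_state (sigma beta : R) (n : nat) (y : nat -> R) (t : nat) : nat * bool :=
  match t with
  | O => (1%nat, true)
  | S t' =>
      let (th, nb) := arrows_state sigma beta n y t' in
      if arrows_test sigma beta n y th t then (S t, true) else (th, false)
  end.

Definition arrows_pred (sigma beta : R) (n : nat) (y : nat -> R) (t : nat) : R :=
  let (th, nb) := arrows_state sigma beta n y (t - 1) in
  if nb then y0 y (t - 1) else meanR y th (t - 1).

Definition arrows_predictions (sigma beta : R) (n : nat) (y : nat -> R) : list R :=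
  map (arrows_pred sigma beta n y) (seq 1 n).

(*  Cost model: a real-RAM with unit-cost instructions.             *)

Inductive instr : Type :=
| NConst (d k : nat)
| NAdd (d a b : nat)
| NSub (d a b : nat)          (* N[d] := N[a] - N[b] (truncated) *)
| NLoad (d p : nat)
| NStore (p s : nat)
| RofN (d a : nat)
| RAdd (d a b : nat)
| RSub (d a b : nat)
| RMul (d a b : nat)
| RDiv (d a b : nat)
| RSqrt (d a : nat)
| RLn (d a : nat)
| RLoad (d p : nat)
| RStore (p s : nat)
| JmpNLt (a b tgt : nat)
| JmpNEq (a b tgt : nat)
| JmpRLt (a b tgt : nat)
| Jmp (tgt : nat)
| Read (d : nat)
| Write (a : nat)
| Halt.

Record config : Type := mkConfig {
  pc : nat;
  nreg : nat -> nat;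
  rreg : nat -> R;
  nread : nat;
  outs : list (nat * R)        (* outputs, each tagged with nread at emission *)
}.

Definition upd {A : Type} (f : nat -> A) (i : nat) (v : A) : nat -> A :=
  fun j => if Nat.eqb j i then v else f j.

Definition exec (y : nat -> R) (i : instr) (c : config) : config :=
  let '(mkConfig p N Rr r o) := c in
  let nx := S p in
  match i with
  | NConst d k => mkConfig nx (upd N d k) Rr r o
  | NAdd d a b => mkConfig nx (upd N d (N a + N b)%nat) Rr r o
  | NSub d a b => mkConfig nx (upd N d (N a - N b)%nat) Rr r o
  | NLoad d q => mkConfig nx (upd N d (N (N q))) Rr r o
  | NStore q s => mkConfig nx (upd N (N q) (N s)) Rr r o
  | RofN d a => mkConfig nx N (upd Rr d (INR (N a))) r o
  | RAdd d a b => mkConfig nx N (upd Rr d (Rr a + Rr b)) r o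
  | RSub d a b => mkConfig nx N (upd Rr d (Rr a - Rr b)) r o
  | RMul d a b => mkConfig nx N (upd Rr d (Rr a * Rr b)) r o
  | RDiv d a b => mkConfig nx N (upd Rr d (Rr a / Rr b)) r o
  | RSqrt d a => mkConfig nx N (upd Rr d (sqrt (Rr a))) r o
  | RLn d a => mkConfig nx N (upd Rr d (ln (Rr a))) r o
  | RLoad d q => mkConfig nx N (upd Rr d (Rr (N q))) r o
  | RStore q s => mkConfig nx N (upd Rr (N q) (Rr s)) r o
  | JmpNLt a b t => mkConfig (if Nat.ltb (N a) (N b) then t else nx) N Rr r o
  | JmpNEq a b t => mkConfig (if Nat.eqb (N a) (N b) then t else nx) N Rr r o
  | JmpRLt a b t => mkConfig (if Rlt_dec (Rr a) (Rr b) then t else nx) N Rr r o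
  | Jmp t => mkConfig t N Rr r o
  | Read d => mkConfig nx N (upd Rr d (y (S r))) (S r) o
  | Write a => mkConfig nx N Rr r (o ++ [(r, Rr a)])
  | Halt => c
  end.

Definition step (P : list instr) (y : nat -> R) (c : config) : option config :=
  match nth_error P (pc c) with
  | None => None
  | Some Halt => None
  | Some i => Some (exec y i c)
  end.

(* run P y (S T) c = Some c' iff the machine halts after at most T steps
   (T unit-cost instructions), in final configuration c' *)
Fixpoint run (P : list instr) (y : nat -> R) (fuel : nat) (c : config) : option config :=
  match fuel with
  | O => None
  | S f => match step P y c with
           | None => Some c
           | Some c' => run P y f c'
           end
  end.

Definition init_config (n : nat) (sigma delta beta : R) : config :=
  mkConfig 0 (upd (fun _ => 0%nat) 0 n)
    (upd (upd (upd (upd (fun _ => 0) 0 (INR n)) 1 sigma) 2 delta) 3 beta)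
    0 [].

From Stdlib Require Import Reals List Lia Lra.
Import ListNotations.
Open Scope R_scope.

(* The test statistic of ARROWS on the bin y_a .. y_t is a sum over Haar levels e (blocks of
   size 2^e) of soft-thresholded coefficients.  Each coefficient is a difference of prefix sums
   P_i = y_1 + ... + y_i of the centred bin, and on a block made of two complete halves the mean
   cancels, so such a block never changes while the bin grows.  Hence the complete blocks of a
   level are added to a running sum once, when they are completed (detected by a counter
   L mod 2^e per level), and only the last, incomplete block of each level is recomputed at
   every step, in constant time from the stored prefix sums and the current mean.  A step thus
   costs O(log L) <= O(log n), and the n steps cost O(n log n). *)

(** * Finite sums *)

Lemma sumR_S f a len : sumR f a (S len) = f a + sumR f (S a) len.
Proof. reflexivity. Qed.

Lemma sumR_split f a x z : sumR f a (x + z) = sumR f a x + sumR f (a + x) z.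
Proof.
  revert a; induction x as [|x IH]; intro a.
  - rewrite Nat.add_0_r; change (sumR f a z = 0 + sumR f a z); ring.
  - rewrite Nat.add_succ_l, !sumR_S, IH.
    replace (S a + x)%nat with (a + S x)%nat by lia; ring.
Qed.

Lemma sumR_S_r f a len : sumR f a (S len) = sumR f a len + f (a + len)%nat.
Proof.
  replace (S len) with (len + 1)%nat by lia.
  rewrite sumR_split, sumR_S; change (sumR f (S (a + len)) 0) with 0; ring.
Qed.

Lemma sumR_ext f g a len : (forall i, (a <= i < a + len)%nat -> f i = g i) ->
  sumR f a len = sumR g a len.
Proof.
  revert a; induction len as [|len IH]; intros a H; [reflexivity|].
  rewrite !sumR_S, H, IH; [reflexivity | intros; apply H; lia | lia].
Qed.

Lemma sumR_eq0 f a len : (forall i, (a <= i < a + len)%nat -> f i = 0) -> sumR f a len = 0.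
Proof.
  revert a; induction len as [|len IH]; intros a H; [reflexivity|].
  rewrite sumR_S, H, IH; [ring | intros; apply H; lia | lia].
Qed.

Lemma sumR_scal_l c f a len : c * sumR f a len = sumR (fun i => c * f i) a len.
Proof.
  revert a; induction len as [|len IH]; intro a; [cbn [sumR seq fold_right]; ring|].
  rewrite !sumR_S, <- IH; ring.
Qed.

Lemma sumR_div_r c f a len : sumR f a len / c = sumR (fun i => f i / c) a len.
Proof. unfold Rdiv; rewrite Rmult_comm, sumR_scal_l; apply sumR_ext; intros; ring. Qed.

Lemma sumR_plus f g a len : sumR (fun i => f i + g i) a len = sumR f a len + sumR g a len.
Proof.
  revert a; induction len as [|len IH]; intro a; [cbn [sumR seq fold_right]; ring|].
  rewrite !sumR_S, IH; ring.
Qed.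

Lemma sumR_shift f a len : sumR f (S a) len = sumR (fun i => f (S i)) a len.
Proof.
  revert a; induction len as [|len IH]; intro a; [reflexivity|].
  rewrite !sumR_S, IH; reflexivity.
Qed.

Lemma sumR_reflect g m : sumR (fun l => g (m - l)%nat) 0 m = sumR g 1 m.
Proof.
  induction m as [|m IH]; [reflexivity|].
  rewrite sumR_S, sumR_S_r, sumR_shift, Nat.sub_0_r, <- IH.
  simpl (S m - S _)%nat; replace (1 + m)%nat with (S m) by lia; ring.
Qed.

Lemma sumR_update f X e a len : (a <= e < a + len)%nat ->
  sumR (fun i => if Nat.eqb i e then X else f i) a len = sumR f a len + (X - f e).
Proof.
  revert a; induction len as [|len IH]; intros a H; [lia|].
  rewrite !sumR_S; destruct (Nat.eqb_spec a e) as [->|ne].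
  - rewrite (sumR_ext _ f); [ring|].
    intros i Hi; destruct (Nat.eqb_spec i e); [lia|reflexivity].
  - rewrite IH by lia; ring.
Qed.

(** * The test statistic through prefix sums *)

Lemma pow2_pred e : (1 <= e)%nat -> (2 ^ e = 2 ^ (e - 1) + 2 ^ (e - 1))%nat.
Proof.
  intro H; destruct e as [|e]; [lia|].
  rewrite Nat.pow_succ_r', Nat.sub_succ, Nat.sub_0_r; lia.
Qed.

Lemma pow2_div2 e : (1 <= e)%nat -> Nat.div (2 ^ e) 2 = (2 ^ (e - 1))%nat.
Proof.
  intro H; rewrite (pow2_pred e H).
  replace (2 ^ (e - 1) + 2 ^ (e - 1))%nat with (2 ^ (e - 1) * 2)%nat by lia.
  apply Nat.div_mul; lia.
Qed.

Lemma mod_S_cases x s : (0 < s)%nat ->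
  (S x mod s = if Nat.eqb (x mod s + 1) s then 0 else x mod s + 1)%nat.
Proof.
  intro Hs; pose proof (Nat.div_mod x s ltac:(lia)) as E.
  pose proof (Nat.mod_upper_bound x s ltac:(lia)) as U.
  destruct (Nat.eqb_spec (x mod s + 1) s) as [H|H].
  - replace (S x) with ((x / s + 1) * s)%nat by lia; apply Nat.Div0.mod_mul.
  - symmetry; apply (Nat.mod_unique _ _ (x / s)); lia.
Qed.

Lemma INR_pow2 l : INR (2 ^ l) = 2 ^ l.
Proof. rewrite pow_INR; reflexivity. Qed.

Lemma sqrt_INR_pow2_pos l : 0 < sqrt (INR (2 ^ l)).
Proof. apply sqrt_lt_R0; rewrite INR_pow2; apply pow_lt; lra. Qed.

Definition psum (y : nat -> R) (i : nat) : R := sumR y 1 i.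

Definition centred_psum (y : nat -> R) (a : nat) (mean : R) (x : nat) : R :=
  psum y x - psum y (a - 1) - INR (x - (a - 1)) * mean.

(* [centred_coef y a b mean e x0] is the Haar coefficient of the block y_(x0+1) .. y_(x0+2^e)
   of the bin y_a .. y_b centred by [mean] and cut at [b]; [raw_coef] is the same without
   centring and cutting. *)
Definition centred_coef (y : nat -> R) (a b : nat) (mean : R) (e x0 : nat) : R :=
  let G := centred_psum y a mean in
  ((G (Nat.min (x0 + 2 ^ e) b) - G (Nat.min (x0 + 2 ^ (e - 1)) b))
   - (G (Nat.min (x0 + 2 ^ (e - 1)) b) - G x0)) / sqrt (INR (2 ^ e)).

Definition raw_coef (y : nat -> R) (e x0 : nat) : R :=
  ((psum y (x0 + 2 ^ e) - psum y (x0 + 2 ^ (e - 1)))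
   - (psum y (x0 + 2 ^ (e - 1)) - psum y x0)) / sqrt (INR (2 ^ e)).

Definition abs_soft (lam x : R) : R := Rabs (soft lam x).

(* The contribution of level [e] (blocks of size [2 ^ e]) to the test statistic of a bin of
   length [L] starting at [a], split into complete blocks and the last incomplete block. *)
Definition complete_part (y : nat -> R) (lam : R) (a e L : nat) : R :=
  sumR (fun j => abs_soft lam (raw_coef y e (a - 1 + j * 2 ^ e)) / sqrt (INR (2 ^ e)))
    0 (L / 2 ^ e).

Definition partial_part (y : nat -> R) (lam : R) (a b e : nat) : R :=
  if Nat.eqb ((b - a + 1) mod 2 ^ e) 0 then 0
  else abs_soft lam (centred_coef y a b (meanR y a b) e (b - (b - a + 1) mod 2 ^ e))
       / sqrt (INR (2 ^ e)).

Lemma psum_S y i : psum y (S i) = psum y i + y (S i).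
Proof. unfold psum; rewrite sumR_S_r; reflexivity. Qed.

Lemma meanR_psum y a t : (1 <= a <= t)%nat ->
  meanR y a t = (psum y t - psum y (a - 1)) / INR (t - a + 1).
Proof.
  intro H; unfold meanR; f_equal; unfold psum.
  replace (sumR y 1 t) with (sumR y 1 (a - 1 + (t - a + 1))) by (f_equal; lia).
  rewrite (sumR_split y 1); replace (1 + (a - 1))%nat with a by lia.
  rewrite (sumR_ext (y0 y) y); [ring|].
  intros i Hi; unfold y0; destruct (Nat.eqb_spec i 0); [lia|reflexivity].
Qed.

Lemma sumR_pad0 y a b x len : (1 <= a <= b)%nat ->
  sumR (pad0 y a b) x len =
  centred_psum y a (meanR y a b) (a - 1 + Nat.min (x + len) (b - a + 1))
  - centred_psum y a (meanR y a b) (a - 1 + Nat.min x (b - a + 1)).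
Proof.
  intro Hab; induction len as [|len IH].
  - rewrite Nat.add_0_r; cbn [sumR seq fold_right]; ring.
  - rewrite sumR_S_r, IH; unfold pad0.
    destruct (Nat.ltb_spec (x + len) (b - a + 1)) as [Hl|Hl].
    + replace (Nat.min (x + S len) (b - a + 1)) with (S (x + len)) by lia.
      replace (Nat.min (x + len) (b - a + 1)) with (x + len)%nat by lia.
      unfold centred_psum, y0.
      replace (a - 1 + S (x + len))%nat with (S (a - 1 + (x + len))) by lia.
      rewrite psum_S.
      replace (S (a - 1 + (x + len)) - (a - 1))%nat with (S (x + len)) by lia.
      replace (a - 1 + (x + len) - (a - 1))%nat with (x + len)%nat by lia.
      replace (S (a - 1 + (x + len))) with (a + (x + len))%nat by lia.
      destruct (Nat.eqb_spec (a + (x + len)) 0); [lia|].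
      rewrite S_INR; ring.
    + replace (Nat.min (x + S len) (b - a + 1)) with (b - a + 1)%nat by lia.
      replace (Nat.min (x + len) (b - a + 1)) with (b - a + 1)%nat by lia; ring.
Qed.

Lemma haar_detail_pad0 y a b m l j : (1 <= a <= b)%nat -> (l < m)%nat ->
  (j * 2 ^ (m - l) <= b - a + 1)%nat ->
  haar_detail m (pad0 y a b) l j
  = centred_coef y a b (meanR y a b) (m - l) (a - 1 + j * 2 ^ (m - l)).
Proof.
  intros Hab Hl Hj; unfold haar_detail, centred_coef; cbv zeta.
  rewrite pow2_div2 by lia; rewrite !sumR_pad0 by lia.
  set (e := (m - l)%nat) in *; set (h := (2 ^ (e - 1))%nat).
  assert (He : (2 ^ e = h + h)%nat) by (apply pow2_pred; lia).
  rewrite He in *.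
  replace (a - 1 + Nat.min (j * (h + h) + h + h) (b - a + 1))%nat
    with (Nat.min (a - 1 + j * (h + h) + (h + h)) b) by lia.
  replace (a - 1 + Nat.min (j * (h + h) + h) (b - a + 1))%nat
    with (Nat.min (a - 1 + j * (h + h) + h) b) by lia.
  replace (a - 1 + Nat.min (j * (h + h)) (b - a + 1))%nat
    with (a - 1 + j * (h + h))%nat by lia.
  reflexivity.
Qed.

Lemma haar_detail_pad0_beyond y a b m l j : (1 <= a <= b)%nat -> (l < m)%nat ->
  (b - a + 1 <= j * 2 ^ (m - l))%nat -> haar_detail m (pad0 y a b) l j = 0.
Proof.
  intros Hab Hl Hj; unfold haar_detail; cbv zeta.
  rewrite !sumR_pad0 by lia; rewrite !(Nat.min_r _ (b - a + 1)) by lia.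
  unfold Rdiv; ring.
Qed.

(* Both halves of a complete block have the same length, so the mean cancels. *)
Lemma centred_coef_complete y a b mean e x0 : (1 <= a)%nat -> (1 <= e)%nat ->
  (a - 1 <= x0)%nat -> (x0 + 2 ^ e <= b)%nat ->
  centred_coef y a b mean e x0 = raw_coef y e x0.
Proof.
  intros Ha He Hx Hb; unfold centred_coef, raw_coef, centred_psum; cbv zeta.
  set (h := (2 ^ (e - 1))%nat).
  assert (E : (2 ^ e = h + h)%nat) by (apply pow2_pred; lia).
  rewrite E in *; rewrite !Nat.min_l by lia.
  replace (x0 + (h + h) - (a - 1))%nat with (x0 - (a - 1) + h + h)%nat by lia.
  replace (x0 + h - (a - 1))%nat with (x0 - (a - 1) + h)%nat by lia.
  rewrite !plus_INR; unfold Rdiv; f_equal; ring.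
Qed.

Lemma abs_soft_0 lam : 0 <= lam -> abs_soft lam 0 = 0.
Proof.
  intro H; unfold abs_soft, soft.
  destruct (Rlt_dec lam 0); [lra|]; destruct (Rlt_dec 0 (- lam)); [lra|].
  apply Rabs_R0.
Qed.

Lemma abs_soft_above lam x : lam < x -> abs_soft lam x = x - lam.
Proof.
  intro H; unfold abs_soft, soft; destruct (Rlt_dec lam x); [|contradiction].
  apply Rabs_right; lra.
Qed.

Lemma abs_soft_below lam x : ~ lam < x -> x < - lam -> abs_soft lam x = - lam - x.
Proof.
  intros H1 H2; unfold abs_soft, soft; destruct (Rlt_dec lam x); [contradiction|].
  destruct (Rlt_dec x (- lam)); [|contradiction]; rewrite Rabs_left by lra; ring.
Qed.

Lemma abs_soft_between lam x : ~ lam < x -> ~ x < - lam -> abs_soft lam x = 0.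
Proof.
  intros H1 H2; unfold abs_soft, soft; destruct (Rlt_dec lam x); [contradiction|].
  destruct (Rlt_dec x (- lam)); [contradiction|]; apply Rabs_R0.
Qed.


(* At level [l] the blocks have size [2 ^ e]: the first [L / 2 ^ e] are complete, at most one
   is incomplete, and the remaining ones lie in the zero padding. *)
Lemma haar_level_split y lam a b l e : (1 <= a <= b)%nat -> 0 <= lam -> (1 <= e)%nat ->
  (b - a + 1 <= 2 ^ (l + e))%nat ->
  sumR (fun j => abs_soft lam (haar_detail (l + e) (pad0 y a b) l j)) 0 (2 ^ l)
    / sqrt (INR (2 ^ e))
  = complete_part y lam a e (b - a + 1) + partial_part y lam a b e.
Proof.
  intros Hab Hlam He HL.
  set (L := (b - a + 1)%nat) in *; set (s := (2 ^ e)%nat).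
  assert (Hs : (0 < s)%nat) by (apply Nat.neq_0_lt_0, Nat.pow_nonzero; lia).
  assert (Hsm : (2 ^ (l + e) = 2 ^ l * s)%nat) by apply Nat.pow_add_r.
  assert (HLm : (l + e - l = e)%nat) by lia.
  set (q := (L / s)%nat); set (r := (L mod s)%nat).
  assert (Hqr : (L = s * q + r)%nat) by (apply Nat.div_mod; lia).
  assert (Hr : (r < s)%nat) by (apply Nat.mod_upper_bound; lia).
  assert (Hq : (q <= 2 ^ l)%nat) by nia.
  rewrite sumR_div_r.
  replace (2 ^ l)%nat with (q + (2 ^ l - q))%nat by lia.
  rewrite sumR_split; unfold complete_part, partial_part; fold L s q r.
  f_equal.
  - apply sumR_ext; intros j Hj.
    rewrite haar_detail_pad0, HLm by (try lia; rewrite HLm; fold s; nia).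
    rewrite centred_coef_complete; [reflexivity|lia..|nia].
  - destruct (Nat.eqb_spec r 0) as [Hr0|Hr0].
    + apply sumR_eq0; intros j Hj.
      rewrite haar_detail_pad0_beyond by (try lia; rewrite HLm; fold s; nia).
      rewrite abs_soft_0 by lra; unfold Rdiv; ring.
    + replace (2 ^ l - q)%nat with (S (2 ^ l - q - 1)) by nia.
      rewrite sumR_S, (sumR_eq0 _ (S (0 + q))).
      * rewrite Rplus_0_r, haar_detail_pad0, HLm by (try lia; rewrite HLm; fold s; nia).
        fold s; replace (a - 1 + (0 + q) * s)%nat with (b - r)%nat by nia; reflexivity.
      * intros j Hj.
        rewrite haar_detail_pad0_beyond by (try lia; rewrite HLm; fold s; nia).
        rewrite abs_soft_0 by lra; unfold Rdiv; ring.
Qed.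

Lemma arrows_statistic_split y lam a b m : (1 <= a <= b)%nat -> 0 <= lam ->
  (b - a + 1 <= 2 ^ m)%nat ->
  (1 / sqrt (INR (2 ^ m))) *
    sumR (fun l => sqrt (2 ^ l) *
       sumR (fun j => Rabs (soft lam (haar_detail m (pad0 y a b) l j))) 0 (2 ^ l)) 0 m
  = sumR (fun e => complete_part y lam a e (b - a + 1)) 1 m
    + sumR (partial_part y lam a b) 1 m.
Proof.
  intros Hab Hlam Hm.
  rewrite <- sumR_plus, sumR_scal_l, <- sumR_reflect; apply sumR_ext; intros l Hl.
  remember (m - l)%nat as e; assert (Hme : m = (l + e)%nat) by lia; subst m.
  rewrite <- (haar_level_split y lam a b l e) by (auto; lia).
  rewrite Nat.pow_add_r, mult_INR, sqrt_mult by apply pos_INR.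
  rewrite <- (INR_pow2 l); unfold abs_soft.
  pose proof (sqrt_INR_pow2_pos l); pose proof (sqrt_INR_pow2_pos e).
  field; lra.
Qed.

Definition threshold (sigma beta : R) (n : nat) : R := sigma * sqrt (beta * ln (INR n)).

Lemma arrows_test_split sigma beta n y a b : (1 <= a <= b)%nat -> 0 < sigma ->
  let lam := threshold sigma beta n in
  let m := Nat.log2_up (b - a + 1) in
  arrows_test sigma beta n y a b =
  if Rlt_dec (sigma / sqrt (INR (2 ^ m)))
       (sumR (fun e => complete_part y lam a e (b - a + 1)) 1 m
        + sumR (partial_part y lam a b) 1 m)
  then true else false.
Proof.
  intros Hab Hs lam m; unfold arrows_test, pad_exp; cbv zeta; fold lam m.
  rewrite arrows_statistic_split; auto.
  - unfold lam, threshold; apply Rmult_le_pos; [lra|apply sqrt_pos].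
  - apply Nat.log2_log2_up_spec; lia.
Qed.

Lemma complete_part_small y lam a e L : (L < 2 ^ e)%nat -> complete_part y lam a e L = 0.
Proof. intro H; unfold complete_part; rewrite Nat.div_small by exact H; reflexivity. Qed.

Lemma complete_part_S y lam a e L : (1 <= L)%nat ->
  complete_part y lam a e L = complete_part y lam a e (L - 1) +
    (if Nat.eqb (L mod 2 ^ e) 0
     then abs_soft lam (raw_coef y e (a - 1 + (L / 2 ^ e - 1) * 2 ^ e)) / sqrt (INR (2 ^ e))
     else 0).
Proof.
  intro HL; unfold complete_part; set (s := (2 ^ e)%nat).
  assert (Hs : (0 < s)%nat) by (apply Nat.neq_0_lt_0, Nat.pow_nonzero; lia).
  set (q := (L / s)%nat); set (r := (L mod s)%nat).
  assert (Hqr : (L = s * q + r)%nat) by (apply Nat.div_mod; lia).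
  assert (Hr : (r < s)%nat) by (apply Nat.mod_upper_bound; lia).
  destruct (Nat.eqb_spec r 0) as [Hr0|Hr0].
  - assert (Hq : (1 <= q)%nat) by nia.
    assert (E : ((L - 1) / s = q - 1)%nat)
      by (symmetry; apply (Nat.div_unique _ _ _ (s - 1)); nia).
    rewrite E; replace q with (S (q - 1)) at 1 by lia.
    rewrite sumR_S_r; reflexivity.
  - assert (E : ((L - 1) / s = q)%nat)
      by (symmetry; apply (Nat.div_unique _ _ _ (r - 1)); nia).
    rewrite E; ring.
Qed.

(** * Incremental form of the test *)

Definition bin_start (sigma beta : R) (n : nat) (y : nat -> R) (t : nat) : nat :=
  fst (arrows_state sigma beta n y t).

Definition emitted (sigma beta : R) (n : nat) (y : nat -> R) (t : nat) : list (nat * R) :=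
  map (fun i => ((i - 1)%nat, arrows_pred sigma beta n y i)) (seq 1 t).

Lemma bin_start_bounds sigma beta n y t : (1 <= bin_start sigma beta n y t <= S t)%nat.
Proof.
  unfold bin_start; induction t as [|t IH]; [simpl; lia|].
  simpl; destruct (arrows_state sigma beta n y t) as [th nb]; simpl in IH.
  destruct (arrows_test sigma beta n y th (S t)); simpl; lia.
Qed.

Lemma bin_start_S sigma beta n y t a : (1 <= t)%nat -> bin_start sigma beta n y (t - 1) = a ->
  bin_start sigma beta n y t = (if arrows_test sigma beta n y a t then S t else a) /\
  arrows_pred sigma beta n y (S t)
  = (if arrows_test sigma beta n y a t then y t else meanR y a t).
Proof.
  intros Ht Ha; unfold bin_start, arrows_pred in *; rewrite Nat.sub_succ, Nat.sub_0_r.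
  destruct t as [|t]; [lia|]; rewrite Nat.sub_succ, Nat.sub_0_r in Ha.
  simpl; destruct (arrows_state sigma beta n y t) as [th nb]; simpl in Ha; subst th.
  destruct (arrows_test sigma beta n y a (S t)); auto.
Qed.

Definition complete_total (y : nat -> R) (lam : R) (n a L : nat) : R :=
  sumR (fun e => complete_part y lam a e L) 1 n.

(* Register R7 within the level loop: the levels below [e] already account for length [L]. *)
Definition complete_total_mixed (y : nat -> R) (lam : R) (n a L e : nat) : R :=
  sumR (fun e' => if Nat.ltb e' e then complete_part y lam a e' L
                  else complete_part y lam a e' (L - 1)) 1 n.

Lemma complete_total_0 y lam n a : complete_total y lam n a 0 = 0.
Proof.
  apply sumR_eq0; intros e He; apply complete_part_small.
  apply Nat.neq_0_lt_0, Nat.pow_nonzero; lia.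
Qed.

Lemma complete_total_levels y lam n a L m : (m <= n)%nat -> (L <= 2 ^ m)%nat ->
  complete_total y lam n a L = sumR (fun e => complete_part y lam a e L) 1 m.
Proof.
  intros Hm HL; unfold complete_total; replace n with (m + (n - m))%nat by lia.
  rewrite sumR_split, (sumR_eq0 _ (1 + m)); [ring|].
  intros e He; apply complete_part_small.
  assert (2 ^ m < 2 ^ e)%nat by (apply Nat.pow_lt_mono_r; lia); lia.
Qed.

Lemma complete_total_mixed_done y lam n a L e : (1 <= e)%nat -> (L <= 2 ^ (e - 1))%nat ->
  complete_total_mixed y lam n a L e = complete_total y lam n a L.
Proof.
  intros He HL; unfold complete_total_mixed, complete_total; apply sumR_ext; intros e' He'.
  destruct (Nat.ltb_spec e' e); [reflexivity|].
  assert (2 ^ (e - 1) < 2 ^ e')%nat by (apply Nat.pow_lt_mono_r; lia).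
  rewrite !complete_part_small by lia; reflexivity.
Qed.

Lemma complete_total_mixed_S y lam n a L e : (1 <= e <= n)%nat ->
  complete_total_mixed y lam n a L (S e)
  = complete_total_mixed y lam n a L e
    + (complete_part y lam a e L - complete_part y lam a e (L - 1)).
Proof.
  intro He; unfold complete_total_mixed.
  set (f := fun e' => if Nat.ltb e' e then complete_part y lam a e' L
                      else complete_part y lam a e' (L - 1)).
  replace (complete_part y lam a e (L - 1)) with (f e)
    by (unfold f; rewrite Nat.ltb_irrefl; reflexivity).
  rewrite <- (sumR_update f (complete_part y lam a e L) e 1 n) by lia.
  unfold f; apply sumR_ext; intros e' He'.
  destruct (Nat.eqb_spec e' e) as [->|Hne].
  - rewrite (proj2 (Nat.ltb_lt e (S e))) by lia; reflexivity.
  - destruct (Nat.ltb_spec e' (S e)); destruct (Nat.ltb_spec e' e); try reflexivity; lia.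
Qed.

Definition last_block_start (L e t : nat) : nat :=
  (t - (if Nat.eqb (L mod 2 ^ e) 0 then 2 ^ e else L mod 2 ^ e))%nat.

Definition last_block_coef (y : nat -> R) (a t e : nat) : R :=
  centred_coef y a t (meanR y a t) e (last_block_start (t - a + 1) e t).

Lemma last_block_start_bounds L e t : (1 <= e)%nat -> (1 <= L <= t)%nat ->
  (t - L <= last_block_start L e t < t)%nat /\ (t <= last_block_start L e t + 2 ^ e)%nat.
Proof.
  intros He HL; unfold last_block_start.
  assert (Hs : (0 < 2 ^ e)%nat) by (pose proof (Nat.pow_nonzero 2 e); lia).
  pose proof (Nat.div_mod L (2 ^ e) ltac:(lia)) as E.
  pose proof (Nat.mod_upper_bound L (2 ^ e) ltac:(lia)) as U.
  destruct (Nat.eqb_spec (L mod 2 ^ e) 0) as [H0|H0].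
  - assert (1 <= L / 2 ^ e)%nat by nia; nia.
  - pose proof (Nat.Div0.mod_le L (2 ^ e)); lia.
Qed.

Lemma level_step_complete y lam n a t e : (1 <= e <= n)%nat -> (1 <= a <= t)%nat ->
  ((t - a + 1) mod 2 ^ e = 0)%nat ->
  complete_total_mixed y lam n a (t - a + 1) (S e)
  = complete_total_mixed y lam n a (t - a + 1) e
    + abs_soft lam (last_block_coef y a t e) / sqrt (INR (2 ^ e))
  /\ partial_part y lam a t e = 0.
Proof.
  intros He Hat Hm; unfold partial_part; rewrite Hm; split; [|reflexivity].
  set (L := (t - a + 1)%nat) in *; set (s := (2 ^ e)%nat) in *.
  assert (Hs : (0 < s)%nat) by (apply Nat.neq_0_lt_0, Nat.pow_nonzero; lia).
  pose proof (Nat.div_mod L s ltac:(lia)) as EL; rewrite Hm, Nat.add_0_r in EL.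
  assert (Hq : (1 <= L / s)%nat) by (destruct (L / s)%nat; lia).
  rewrite complete_total_mixed_S, (complete_part_S _ _ _ _ L) by lia; fold s; rewrite Hm.
  unfold last_block_coef, last_block_start; fold L s; rewrite Hm; cbn [Nat.eqb].
  rewrite centred_coef_complete by (try lia; nia).
  replace (a - 1 + (L / s - 1) * s)%nat with (t - s)%nat by nia; ring.
Qed.

Lemma level_step_partial y lam n a t e : (1 <= e <= n)%nat -> (1 <= a <= t)%nat ->
  ((t - a + 1) mod 2 ^ e <> 0)%nat ->
  complete_total_mixed y lam n a (t - a + 1) (S e) = complete_total_mixed y lam n a (t - a + 1) e
  /\ partial_part y lam a t e = abs_soft lam (last_block_coef y a t e) / sqrt (INR (2 ^ e)).
Proof.
  intros He Hat Hm; unfold partial_part, last_block_coef, last_block_start.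
  rewrite complete_total_mixed_S, (complete_part_S _ _ _ _ (t - a + 1)) by lia.
  destruct (Nat.eqb_spec ((t - a + 1) mod 2 ^ e) 0); [contradiction|].
  split; [ring|reflexivity].
Qed.

Lemma arrows_test_levels sigma beta n y a t e : 0 < sigma -> (1 <= a <= t)%nat -> (t <= n)%nat ->
  (1 <= e)%nat -> (e - 1 <= Nat.log2_up (t - a + 1))%nat -> (t - a + 1 <= 2 ^ (e - 1))%nat ->
  let lam := threshold sigma beta n in
  arrows_test sigma beta n y a t =
  if Rlt_dec (sigma / sqrt (INR (2 ^ (e - 1))))
       (complete_total_mixed y lam n a (t - a + 1) e + sumR (partial_part y lam a t) 1 (e - 1))
  then true else false.
Proof.
  intros Hs Hat Htn He Hlog HL lam.
  assert (Hm : Nat.log2_up (t - a + 1) = (e - 1)%nat)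
    by (apply Nat.le_antisymm; [apply Nat.log2_up_le_pow2|]; lia).
  assert (HmL : (Nat.log2_up (t - a + 1) <= t - a + 1)%nat)
    by (apply Nat.log2_up_le_pow2; [lia|]; apply Nat.lt_le_incl, Nat.pow_gt_lin_r; lia).
  rewrite arrows_test_split by assumption; cbv zeta; rewrite Hm.
  rewrite complete_total_mixed_done, (complete_total_levels _ _ _ _ _ (e - 1)) by lia.
  reflexivity.
Qed.

(** * A real-RAM implementation *)

Section Execution.
Variables (P : list instr) (y : nat -> R).

Fixpoint steps (k : nat) (c : config) : option config :=
  match k with
  | O => Some c
  | S k' => match step P y c with None => None | Some c1 => steps k' c1 end
  end.

Definition reach (c c' : config) (B : nat) : Prop :=
  exists k, (k <= B)%nat /\ steps k c = Some c'.

Lemma reach_refl c B : reach c c B.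
Proof. exists 0%nat; split; [lia|reflexivity]. Qed.

Lemma steps_add k1 k2 c c1 : steps k1 c = Some c1 -> steps (k1 + k2) c = steps k2 c1.
Proof.
  revert c; induction k1 as [|k1 IH]; intros c H; simpl in *; [congruence|].
  destruct (step P y c); [apply IH; auto|discriminate].
Qed.

Lemma reach_trans c c1 c2 B1 B2 : reach c c1 B1 -> reach c1 c2 B2 -> reach c c2 (B1 + B2).
Proof.
  intros [k1 [H1 E1]] [k2 [H2 E2]]; exists (k1 + k2)%nat; split; [lia|].
  rewrite (steps_add _ _ _ _ E1); exact E2.
Qed.

Lemma reach_mono c c1 B B' : (B <= B')%nat -> reach c c1 B -> reach c c1 B'.
Proof. intros H [k [Hk E]]; exists k; split; [lia|exact E]. Qed.

Lemma reach_S c c1 c' B : step P y c = Some c1 -> reach c1 c' B -> reach c c' (S B).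
Proof. intros H [k [Hk E]]; exists (S k); split; [lia|]; simpl; rewrite H; exact E. Qed.

Lemma run_of_reach c c' B f : reach c c' B -> step P y c' = None -> (B < f)%nat ->
  run P y f c = Some c'.
Proof.
  intros [k [Hk E]] Hn; revert c f B Hk E.
  induction k as [|k IH]; intros c f B Hk E Hf; destruct f as [|f]; try lia; simpl in *.
  - injection E as <-; rewrite Hn; reflexivity.
  - destruct (step P y c) as [c1|]; [|discriminate].
    apply (IH c1 f (B - 1)%nat); [lia|exact E|lia].
Qed.

End Execution.

Lemma upd_eq {A} (f : nat -> A) i v : upd f i v i = v.
Proof. unfold upd; rewrite Nat.eqb_refl; reflexivity. Qed.

Lemma upd_neq {A} (f : nat -> A) i j v : i <> j -> upd f j v i = f i.
Proof. intro H; unfold upd; destruct (Nat.eqb_spec i j); [contradiction|reflexivity]. Qed.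

(* Naturals: N0 = n, N1 = t, N2 = t_h, N3 = L = t - t_h + 1, N4 = 2^(e-1),
   N5 = 2^e, N6 = 20 + e, N7 = L mod 2^e, N12 = 0, N13 = 1, N15 = t_h - 1, and N(20+e) stores
   (L - 1) mod 2^e for every level e of the previous step.  Reals: R1 = sigma, R4 = 0,
   R5 = lambda, R6 = -lambda, R7 and R8 sum up the complete and the incomplete blocks,
   R9 = mean of the bin, R10 = next prediction, R11 = y_t, R12 = sqrt 2^e, R13 = P_(t_h-1),
   R19 = current coefficient, and R(20+i) = P_i = y_1 + ... + y_i.  Level e runs through
   1 .. log2_up L at step t; addresses are given at the start of each line. *)
Definition prog : list instr := [
  (*   0 *) RLn 12 0; RMul 12 3 12; RSqrt 12 12; RMul 5 1 12; RSub 6 4 5;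
  (*   5 *) NConst 1 1; NConst 2 1; NConst 13 1;
  (*   8 *) JmpNLt 0 1 107; Write 10; Read 11;
  (*  11 *) NConst 8 20; NAdd 8 8 1; NConst 9 19; NAdd 9 9 1; RLoad 12 9; RAdd 12 12 11;
            RStore 8 12;
  (*  18 *) NSub 3 1 2; NAdd 3 3 13; NSub 15 2 13; NConst 10 20; NAdd 10 10 15; RLoad 13 10;
  (*  24 *) RSub 14 12 13; RofN 15 3; RDiv 9 14 15; RAdd 8 4 4; NConst 4 1; NConst 6 21;
  (*  30 *) JmpNLt 4 3 32; Jmp 95;
  (*  32 *) NAdd 5 4 4; NAdd 11 4 13; JmpNEq 11 3 37; NLoad 7 6; Jmp 38;
  (*  37 *) NSub 7 5 4;
  (*  38 *) NAdd 7 7 13; JmpNEq 7 5 43; NStore 6 7; NSub 8 1 7; Jmp 46;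
  (*  43 *) NConst 7 0; NStore 6 7; NSub 8 1 5;
  (*  46 *) NAdd 9 8 4; JmpNLt 1 9 49; Jmp 50;
  (*  49 *) NAdd 9 1 12;
  (*  50 *) NConst 11 20; NAdd 11 11 8; RLoad 15 11; RSub 15 15 13;
            NSub 16 8 15; RofN 16 16; RMul 16 16 9; RSub 15 15 16;
  (*  58 *) NConst 11 20; NAdd 11 11 9; RLoad 17 11; RSub 17 17 13;
            NSub 16 9 15; RofN 16 16; RMul 16 16 9; RSub 17 17 16;
  (*  66 *) NConst 11 20; NAdd 11 11 1; RLoad 18 11; RSub 18 18 13;
            NSub 16 1 15; RofN 16 16; RMul 16 16 9; RSub 18 18 16;
  (*  74 *) RSub 19 18 17; RSub 12 17 15; RSub 19 19 12; RofN 12 5; RSqrt 12 12;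
            RDiv 19 19 12;
  (*  80 *) JmpRLt 5 19 84; JmpRLt 19 6 86; RAdd 19 4 4; Jmp 87;
  (*  84 *) RSub 19 19 5; Jmp 87;
  (*  86 *) RSub 19 6 19;
  (*  87 *) RDiv 19 19 12; JmpNEq 7 12 91; RAdd 8 8 19; Jmp 92;
  (*  91 *) RAdd 7 7 19;
  (*  92 *) NAdd 4 5 12; NAdd 6 6 13; Jmp 30;
  (*  95 *) RofN 12 4; RSqrt 12 12; RDiv 12 1 12; RAdd 14 7 8; JmpRLt 12 14 102;
  (* 100 *) RAdd 10 9 4; Jmp 105;
  (* 102 *) NAdd 2 1 13; RAdd 7 4 4; RAdd 10 11 4;
  (* 105 *) NAdd 1 1 13; Jmp 8;
  (* 107 *) Halt ].

Ltac exec_step :=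
  eapply reach_S; [reflexivity|]; cbn [exec upd pc nreg rreg nread outs Nat.eqb Nat.add].

Ltac take_branch :=
  match goal with |- reach _ _ {| pc := if ?b then _ else _ |} _ _ =>
    first [ replace b with true by (symmetry; first [apply Nat.ltb_lt | apply Nat.eqb_eq]; lia)
          | replace b with false by (symmetry; first [apply Nat.ltb_ge | apply Nat.eqb_neq]; lia) ]
  end.

(* The level counters N(20+e'): L mod 2^e' for the levels already visited at this step, and
   (L - 1) mod 2^e' for the other levels that existed at the previous step. *)
Definition level_counters (L e : nat) (N : nat -> nat) : Prop :=
  (forall e', (1 <= e' < e)%nat -> N (20 + e')%nat = L mod 2 ^ e') /\
  (forall e', (e <= e')%nat -> (2 ^ (e' - 1) < L - 1)%nat -> N (20 + e')%nat = (L - 1) mod 2 ^ e').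

Lemma level_counters_S L e N N' : level_counters L e N -> N' (20 + e)%nat = (L mod 2 ^ e)%nat ->
  (forall e', e' <> e -> N' (20 + e')%nat = N (20 + e')%nat) -> level_counters L (S e) N'.
Proof.
  intros [Hlow Hhigh] He Hother; split.
  - intros e' He'; destruct (Nat.eq_dec e' e) as [->|Hne]; [exact He|].
    rewrite Hother by exact Hne; apply Hlow; lia.
  - intros e' He' HL; rewrite Hother by lia; apply Hhigh; lia.
Qed.

Lemma level_counters_ext L e N N' :
  (forall i, (20 <= i)%nat -> N' i = N i) -> level_counters L e N -> level_counters L e N'.
Proof.
  intros E [Hlow Hhigh]; split; intros; rewrite E by lia; auto.
Qed.

Lemma level_counters_close L e N : (1 <= e)%nat -> (L <= 2 ^ (e - 1))%nat ->
  level_counters L e N -> level_counters (L + 1) 1 N.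
Proof.
  intros He HL [Hlow _]; split; [lia|].
  intros e' He' HL'; rewrite Nat.add_sub in *; apply Hlow; split; [lia|].
  destruct (Nat.lt_ge_cases e' e) as [|Hge]; [assumption|].
  assert (2 ^ (e - 1) <= 2 ^ (e' - 1))%nat by (apply Nat.pow_le_mono_r; lia); lia.
Qed.

Definition step_inv n sigma beta y t (c : config) : Prop :=
  let a := bin_start sigma beta n y (t - 1) in
  pc c = 8%nat /\ (1 <= t <= S n)%nat /\
  nread c = (t - 1)%nat /\ outs c = emitted sigma beta n y (t - 1) /\
  nreg c 0 = n /\ nreg c 1 = t /\ nreg c 2 = a /\ nreg c 12 = 0%nat /\ nreg c 13 = 1%nat /\
  level_counters (t - a + 1) 1 (nreg c) /\
  rreg c 1 = sigma /\ rreg c 4 = 0 /\ rreg c 5 = threshold sigma beta n /\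
  rreg c 6 = 0 - threshold sigma beta n /\
  rreg c 7 = complete_total y (threshold sigma beta n) n a (t - a) /\
  rreg c 10 = arrows_pred sigma beta n y t /\
  (forall i, (i <= t - 1)%nat -> rreg c (20 + i) = psum y i).

Definition step_regs n sigma beta y t a (c : config) : Prop :=
  a = bin_start sigma beta n y (t - 1) /\ (1 <= a <= t)%nat /\ (t <= n)%nat /\
  nread c = t /\ outs c = emitted sigma beta n y t /\
  nreg c 0 = n /\ nreg c 1 = t /\ nreg c 2 = a /\ nreg c 3 = (t - a + 1)%nat /\
  nreg c 12 = 0%nat /\ nreg c 13 = 1%nat /\ nreg c 15 = (a - 1)%nat /\
  rreg c 1 = sigma /\ rreg c 4 = 0 /\ rreg c 5 = threshold sigma beta n /\
  rreg c 6 = 0 - threshold sigma beta n /\ rreg c 9 = meanR y a t /\ rreg c 11 = y t /\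
  rreg c 13 = psum y (a - 1) /\ (forall i, (i <= t)%nat -> rreg c (20 + i) = psum y i).

Definition level_regs n sigma beta y t a e (c : config) : Prop :=
  step_regs n sigma beta y t a c /\ (1 <= e)%nat /\
  nreg c 4 = (2 ^ (e - 1))%nat /\ nreg c 6 = (20 + e)%nat /\
  rreg c 7 = complete_total_mixed y (threshold sigma beta n) n a (t - a + 1) e /\
  rreg c 8 = sumR (partial_part y (threshold sigma beta n) a t) 1 (e - 1).

Definition loop_inv n sigma beta y t a e (c : config) : Prop :=
  pc c = 30%nat /\ level_regs n sigma beta y t a e c /\
  level_counters (t - a + 1) e (nreg c) /\ (e - 1 <= Nat.log2_up (t - a + 1))%nat.

Definition level_mid n sigma beta y t a e (c : config) : Prop :=
  level_regs n sigma beta y t a e c /\ level_counters (t - a + 1) (S e) (nreg c) /\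
  nreg c 5 = (2 ^ e)%nat /\ nreg c 7 = ((t - a + 1) mod 2 ^ e)%nat /\
  (2 ^ (e - 1) < t - a + 1)%nat.

Definition coef_inv n sigma beta y t a e (c : config) : Prop :=
  pc c = 46%nat /\ level_mid n sigma beta y t a e c /\
  nreg c 8 = last_block_start (t - a + 1) e t.

Definition level_at n sigma beta y t a e (p : nat) (v : R) (c : config) : Prop :=
  pc c = p /\ level_mid n sigma beta y t a e c /\
  rreg c 12 = sqrt (INR (2 ^ e)) /\ rreg c 19 = v.

Lemma step_regs_frame n sigma beta y t a c c' :
  step_regs n sigma beta y t a c -> nread c' = nread c -> outs c' = outs c ->
  (forall i, In i [0;1;2;3;12;13;15]%nat -> nreg c' i = nreg c i) ->
  (forall i, In i [1;4;5;6;9;11;13]%nat \/ (20 <= i)%nat -> rreg c' i = rreg c i) ->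
  step_regs n sigma beta y t a c'.
Proof.
  intros (Ha & Hat & Htn & H) Er Eo EN ER; do 3 (split; [assumption|]).
  unfold step_regs in H; rewrite Er, Eo, !EN, !ER by (simpl; tauto).
  intuition; rewrite ER by lia; auto.
Qed.

Lemma level_regs_frame n sigma beta y t a e c c' :
  level_regs n sigma beta y t a e c -> nread c' = nread c -> outs c' = outs c ->
  (forall i, In i [0;1;2;3;4;6;12;13;15]%nat -> nreg c' i = nreg c i) ->
  (forall i, In i [1;4;5;6;7;8;9;11;13]%nat \/ (20 <= i)%nat -> rreg c' i = rreg c i) ->
  level_regs n sigma beta y t a e c'.
Proof.
  intros (Hs & He & H) Er Eo EN ER; split.
  - apply (step_regs_frame _ _ _ _ _ _ c); auto; intros i Hi;
      [apply EN | apply ER]; simpl in *; tauto.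
  - rewrite !EN, !ER by (simpl; tauto); tauto.
Qed.

Lemma level_mid_frame n sigma beta y t a e c c' :
  level_mid n sigma beta y t a e c -> nread c' = nread c -> outs c' = outs c ->
  (forall i, In i [0;1;2;3;4;5;6;7;12;13;15]%nat \/ (20 <= i)%nat -> nreg c' i = nreg c i) ->
  (forall i, In i [1;4;5;6;7;8;9;11;13]%nat \/ (20 <= i)%nat -> rreg c' i = rreg c i) ->
  level_mid n sigma beta y t a e c'.
Proof.
  intros (Hl & HC & H) Er Eo EN ER; split; [|split].
  - apply (level_regs_frame _ _ _ _ _ _ _ c); auto; intros i Hi; apply EN; simpl in *; tauto.
  - apply (level_counters_ext _ _ (nreg c)); [intros; apply EN; lia | exact HC].
  - rewrite !EN by (simpl; tauto); exact H.
Qed.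

Ltac agree_on_regs :=
  let i := fresh "i" in let Hi := fresh "Hi" in
  intros i Hi; simpl in Hi; cbn [nreg rreg]; repeat (rewrite upd_neq by lia); reflexivity.

(** * Correctness and running time *)

Lemma init_step_inv n sigma delta beta y :
  exists c, reach prog y (init_config n sigma delta beta) c 8 /\ step_inv n sigma beta y 1 c.
Proof.
  eexists; split; [unfold init_config; do 8 exec_step; apply reach_refl|].
  unfold step_inv, level_counters; cbv zeta; cbn [pc nreg rreg nread outs].
  change (bin_start sigma beta n y (1 - 1)) with 1%nat.
  repeat split; cbn [upd Nat.eqb]; try reflexivity; try lia.
  - rewrite Nat.sub_diag, complete_total_0; reflexivity.
  - intros i Hi; replace i with 0%nat by lia; reflexivity.
Qed.

Lemma step_inv_halt n sigma beta y c : step_inv n sigma beta y (S n) c ->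
  exists c', reach prog y c c' 1 /\ step prog y c' = None /\ outs c' = emitted sigma beta n y n.
Proof.
  intros (Hpc & Ht & Hr & Ho & H0 & H1 & _).
  destruct c as [p N Rr r o]; cbn [pc nreg rreg nread outs] in *; subst p.
  eexists; split; [exec_step; take_branch; apply reach_refl|].
  split; [reflexivity|]; cbn [outs]; rewrite Ho; f_equal; lia.
Qed.

Lemma loop_enter n sigma beta y t c : step_inv n sigma beta y t c -> (t <= n)%nat ->
  exists c', reach prog y c c' 25 /\
             loop_inv n sigma beta y t (bin_start sigma beta n y (t - 1)) 1 c'.
Proof.
  intros (Hpc & Ht & Hr & Ho & H0 & H1 & H2 & H12 & H13 & HC & R1 & R4 & R5 & R6 & R7 & R10 & HP)
    Htn.
  set (a := bin_start sigma beta n y (t - 1)) in *.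
  assert (Ha : (1 <= a <= t)%nat) by (pose proof (bin_start_bounds sigma beta n y (t - 1)); lia).
  destruct c as [p N Rr r o]; cbn [pc nreg rreg nread outs] in *; subst p.
  eexists; split; [exec_step; take_branch; do 21 exec_step; apply reach_refl|].
  assert (HPt : Rr (19 + t)%nat = psum y (t - 1))
    by (replace (19 + t)%nat with (20 + (t - 1))%nat by lia; apply HP; lia).
  assert (HPa : Rr (20 + (a - 1))%nat = psum y (a - 1)) by (apply HP; lia).
  assert (HPS : psum y (t - 1) + y t = psum y t)
    by (replace t with (S (t - 1)) at 2 3 by lia; rewrite psum_S; reflexivity).
  cbn [Nat.add] in HPt, HPa.
  split; [reflexivity|]; split; [|split; [|simpl; lia]].
  - unfold level_regs, step_regs; cbn [nreg rreg nread outs].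
    rewrite ?H0, ?H1, ?H2, ?H12, ?H13, ?Hr, ?Ho.
    replace (S (t - 1)) with t by lia.
    repeat split; cbn [upd Nat.eqb Nat.add]; rewrite ?R1, ?R4, ?R5, ?R6, ?R7;
      try reflexivity; try lia.
    + unfold emitted; rewrite R10; destruct t as [|t']; [lia|].
      rewrite Nat.sub_succ, Nat.sub_0_r, seq_S, map_app; simpl; rewrite Nat.sub_0_r; reflexivity.
    + repeat (rewrite upd_neq by lia); rewrite HPt, HPa, meanR_psum, HPS by lia; reflexivity.
    + repeat (rewrite upd_neq by lia); exact HPa.
    + intros i Hi; destruct (Nat.eq_dec i t) as [->|Hne].
      * rewrite upd_eq, HPt, HPS; reflexivity.
      * repeat (rewrite upd_neq by lia); apply HP; lia.
    + unfold complete_total_mixed, complete_total; apply sumR_ext; intros e' He'.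
      rewrite (proj2 (Nat.ltb_ge e' 1)) by lia; f_equal; lia.
    + rewrite Nat.sub_diag; cbn [sumR seq fold_right]; ring.
  - apply (level_counters_ext _ _ N); [|exact HC].
    intros; cbn [nreg]; repeat (rewrite upd_neq by lia); reflexivity.
Qed.

Lemma counter_load y c e L : pc c = 30%nat ->
  nreg c 3 = L -> nreg c 4 = (2 ^ (e - 1))%nat -> nreg c 6 = (20 + e)%nat -> nreg c 13 = 1%nat ->
  (1 <= e)%nat -> (2 ^ (e - 1) < L)%nat ->
  ((2 ^ (e - 1) < L - 1)%nat -> nreg c (20 + e)%nat = ((L - 1) mod 2 ^ e)%nat) ->
  exists c1, reach prog y c c1 6 /\ pc c1 = 38%nat /\
    nreg c1 5 = (2 ^ e)%nat /\ nreg c1 7 = ((L - 1) mod 2 ^ e)%nat /\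
    (forall i, i <> 5%nat -> i <> 7%nat -> i <> 11%nat -> nreg c1 i = nreg c i) /\
    rreg c1 = rreg c /\ nread c1 = nread c /\ outs c1 = outs c.
Proof.
  intros Hpc H3 H4 H6 H13 He HL Hcnt.
  set (h := (2 ^ (e - 1))%nat) in *.
  assert (Hs : (2 ^ e = h + h)%nat) by (apply pow2_pred; lia).
  assert (Hh : (0 < h)%nat) by (apply Nat.neq_0_lt_0, Nat.pow_nonzero; lia).
  destruct c as [p N Rr r o]; cbn [pc nreg rreg nread outs] in *; subst p.
  destruct (Nat.eqb_spec (h + 1) L) as [Hnew|Hold].
  - (* level [e] is new (the bin had length [2 ^ (e - 1)] before), so no counter is stored *)
    eexists; split.
    { exec_step; take_branch; do 3 exec_step; take_branch; exec_step; apply reach_refl. }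
    cbn [pc nreg rreg nread outs upd Nat.eqb]; rewrite H4.
    repeat split; try (intros i Hi5 Hi7 Hi11; rewrite !upd_neq by lia; reflexivity); try lia.
    replace (L - 1)%nat with h by lia; rewrite Nat.mod_small; lia.
  - eexists; split.
    { exec_step; take_branch; do 3 exec_step; take_branch; exec_step.
      rewrite H6; cbn [upd Nat.eqb Nat.add]; exec_step; apply reach_refl. }
    cbn [pc nreg rreg nread outs upd Nat.eqb]; rewrite H4.
    repeat split; try (intros i Hi5 Hi7 Hi11; rewrite !upd_neq by lia; reflexivity); try lia.
    apply Hcnt; lia.
Qed.

Lemma counter_store y c e L t : pc c = 38%nat ->
  nreg c 1 = t -> nreg c 5 = (2 ^ e)%nat -> nreg c 6 = (20 + e)%nat ->
  nreg c 7 = ((L - 1) mod 2 ^ e)%nat -> nreg c 13 = 1%nat -> (1 <= L <= t)%nat ->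
  exists c2, reach prog y c c2 5 /\ pc c2 = 46%nat /\
    nreg c2 7 = (L mod 2 ^ e)%nat /\ nreg c2 (20 + e)%nat = (L mod 2 ^ e)%nat /\
    nreg c2 8 = last_block_start L e t /\
    (forall i, i <> 7%nat -> i <> 8%nat -> i <> (20 + e)%nat -> nreg c2 i = nreg c i) /\
    rreg c2 = rreg c /\ nread c2 = nread c /\ outs c2 = outs c.
Proof.
  intros Hpc H1 H5 H6 H7 H13 HL.
  assert (Hs : (0 < 2 ^ e)%nat) by (apply Nat.neq_0_lt_0, Nat.pow_nonzero; lia).
  pose proof (mod_S_cases (L - 1) (2 ^ e) Hs) as Hmod.
  replace (S (L - 1)) with L in Hmod by lia.
  pose proof (Nat.mod_upper_bound (L - 1) (2 ^ e) ltac:(lia)).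
  destruct c as [p N Rr r o]; cbn [pc nreg rreg nread outs] in *; subst p.
  unfold last_block_start; rewrite Hmod.
  destruct (Nat.eqb_spec ((L - 1) mod 2 ^ e + 1) (2 ^ e)) as [Hw|Hw]; eexists; split.
  1: do 2 exec_step; take_branch; do 2 exec_step; rewrite H6; cbn [Nat.add];
     exec_step; apply reach_refl.
  2: do 2 exec_step; take_branch; exec_step; rewrite H6; cbn [Nat.add];
     do 2 exec_step; apply reach_refl.
  all: cbn [pc nreg rreg nread outs]; repeat split;
    try (intros i Hi7 Hi8 Hie; rewrite !upd_neq by lia; reflexivity);
    repeat (rewrite upd_neq by lia); rewrite upd_eq, ?Nat.add_1_r; cbn [Nat.eqb]; lia.
Qed.

Lemma counter_update n sigma beta y t a e c : loop_inv n sigma beta y t a e c ->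
  (2 ^ (e - 1) < t - a + 1)%nat ->
  exists c', reach prog y c c' 11 /\ coef_inv n sigma beta y t a e c'.
Proof.
  intros (Hpc & Hl & HC & _) HL.
  pose proof Hl as ((_ & Hat & _ & _ & _ & _ & H1 & _ & H3 & _ & H13 & _) & He & H4 & H6 & _).
  destruct (counter_load y c e (t - a + 1)) as (c1 & Hr1 & P1 & N15 & N17 & N1 & R1 & Er1 & Eo1);
    auto; [intros; apply HC; lia|].
  destruct (counter_store y c1 e (t - a + 1) t)
    as (c2 & Hr2 & P2 & N27 & N2e & N28 & N2 & R2 & Er2 & Eo2);
    auto; try lia; try (rewrite N1 by lia; auto).
  assert (Nc : forall i, i <> 5%nat -> i <> 7%nat -> i <> 8%nat -> i <> 11%nat ->
                         i <> (20 + e)%nat -> nreg c2 i = nreg c i)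
    by (intros; rewrite N2, N1 by assumption; reflexivity).
  exists c2; split; [exact (reach_trans _ _ _ _ _ _ _ Hr1 Hr2)|].
  split; [exact P2|]; split; [|exact N28].
  split; [|split; [|repeat split; auto; rewrite N2 by lia; exact N15]].
  - apply (level_regs_frame _ _ _ _ _ _ _ c); auto; [congruence|congruence| |].
    + intros i Hi; simpl in Hi; apply Nc; lia.
    + intros; rewrite R2, R1; reflexivity.
  - apply (level_counters_S _ _ (nreg c)); [exact HC|exact N2e|].
    intros e' He'; apply Nc; lia.
Qed.

Lemma midpoint_load y c x0 h t : pc c = 46%nat ->
  nreg c 1 = t -> nreg c 4 = h -> nreg c 8 = x0 -> nreg c 12 = 0%nat ->
  exists c1, reach prog y c c1 3 /\ pc c1 = 50%nat /\ nreg c1 9 = Nat.min (x0 + h) t /\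
    (forall i, i <> 9%nat -> nreg c1 i = nreg c i) /\
    rreg c1 = rreg c /\ nread c1 = nread c /\ outs c1 = outs c.
Proof.
  intros Hpc H1 H4 H8 H12.
  destruct c as [p N Rr r o]; cbn [pc nreg rreg nread outs] in *; subst p.
  destruct (Nat.ltb_spec t (x0 + h)) as [Hc|Hc]; eexists; split.
  1, 3: do 2 exec_step; take_branch; exec_step; apply reach_refl.
  all: cbn [pc nreg rreg nread outs]; repeat split;
    try (intros i Hi; rewrite !upd_neq by lia; reflexivity); rewrite upd_eq; lia.
Qed.

Lemma coef_arith y c a x0 m t s mean : pc c = 50%nat ->
  nreg c 1 = t -> nreg c 5 = s -> nreg c 8 = x0 -> nreg c 9 = m -> nreg c 15 = (a - 1)%nat ->
  rreg c 9 = mean -> rreg c 13 = psum y (a - 1) ->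
  rreg c (20 + x0)%nat = psum y x0 -> rreg c (20 + m)%nat = psum y m ->
  rreg c (20 + t)%nat = psum y t ->
  let G := centred_psum y a mean in
  exists c1, reach prog y c c1 30 /\ pc c1 = 80%nat /\
    rreg c1 19 = ((G t - G m) - (G m - G x0)) / sqrt (INR s) /\ rreg c1 12 = sqrt (INR s) /\
    (forall i, i <> 11%nat -> i <> 16%nat -> nreg c1 i = nreg c i) /\
    (forall i, (i <= 11 \/ 13 <= i <= 14 \/ 20 <= i)%nat -> rreg c1 i = rreg c i) /\
    nread c1 = nread c /\ outs c1 = outs c.
Proof.
  intros Hpc H1 H5 H8 H9 H15 R9 R13 Rx Rm Rt G.
  destruct c as [p N Rr r o]; cbn [pc nreg rreg nread outs] in *; subst p.
  eexists; split; [do 30 exec_step; apply reach_refl|].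
  cbn [pc nreg rreg nread outs]; repeat split;
    try (intros i Hi; rewrite !upd_neq by lia; reflexivity);
    try (intros i Hi Hi'; rewrite !upd_neq by lia; reflexivity).
  - rewrite H1, H5, H8, H9, H15, R9, R13; cbn [Nat.add] in Rx, Rm, Rt; rewrite Rx, Rm, Rt.
    reflexivity.
  - rewrite H5; reflexivity.
Qed.

Lemma coef_compute n sigma beta y t a e c : coef_inv n sigma beta y t a e c ->
  exists c', reach prog y c c' 33 /\ level_at n sigma beta y t a e 80 (last_block_coef y a t e) c'.
Proof.
  intros (Hpc & Hm & H8).
  pose proof Hm as ((Hs & He & H4 & _) & _ & H5 & _ & HL).
  pose proof Hs
    as (_ & Hat & _ & _ & _ & _ & H1 & _ & _ & H12 & _ & H15 & _ & _ & _ & _ & R9 & _ & R13 & HP).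
  set (x0 := last_block_start (t - a + 1) e t) in *.
  destruct (last_block_start_bounds (t - a + 1) e t) as [Hx1 Hx2]; [lia|lia|].
  destruct (midpoint_load y c x0 (2 ^ (e - 1)) t)
    as (c1 & Hr1 & P1 & N19 & N1 & R1 & Er1 & Eo1); auto.
  set (m := Nat.min (x0 + 2 ^ (e - 1)) t) in *.
  destruct (coef_arith y c1 a x0 m t (2 ^ e) (meanR y a t))
    as (c2 & Hr2 & P2 & V & R12 & N2 & R2 & Er2 & Eo2);
    auto; try (rewrite N1 by lia; auto); try (rewrite R1; auto; apply HP; lia).
  exists c2; split; [exact (reach_trans _ _ _ _ _ _ _ Hr1 Hr2)|].
  split; [exact P2|]; split; [|split; [exact R12|]].
  - apply (level_mid_frame _ _ _ _ _ _ _ c); auto; try congruence.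
    + intros i Hi; simpl in Hi; rewrite N2, N1 by lia; reflexivity.
    + intros i Hi; simpl in Hi; rewrite R2, R1 by lia; reflexivity.
  - rewrite V; unfold last_block_coef, centred_coef; fold x0 m.
    rewrite (Nat.min_r (x0 + 2 ^ e) t) by lia; reflexivity.
Qed.

Lemma soft_threshold_exec y c lam v : pc c = 80%nat ->
  rreg c 4 = 0 -> rreg c 5 = lam -> rreg c 6 = 0 - lam -> rreg c 19 = v ->
  exists c1, reach prog y c c1 4 /\ pc c1 = 87%nat /\ rreg c1 19 = abs_soft lam v /\
    nreg c1 = nreg c /\ (forall i, i <> 19%nat -> rreg c1 i = rreg c i) /\
    nread c1 = nread c /\ outs c1 = outs c.
Proof.
  intros Hpc R4 R5 R6 R19.
  destruct c as [p N Rr r o]; cbn [pc nreg rreg nread outs] in *; subst p.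
  destruct (Rlt_dec lam v) as [Ha|Ha]; [|destruct (Rlt_dec v (0 - lam)) as [Hb|Hb]];
    eexists; split.
  1: { exec_step; rewrite R5, R19; destruct (Rlt_dec lam v); [|contradiction].
        do 2 exec_step; apply reach_refl. }
  2: { exec_step; rewrite R5, R19; destruct (Rlt_dec lam v); [contradiction|].
        exec_step; rewrite R6, R19; destruct (Rlt_dec v (0 - lam)); [|contradiction].
        exec_step; apply reach_refl. }
  3: { exec_step; rewrite R5, R19; destruct (Rlt_dec lam v); [contradiction|].
        exec_step; rewrite R6, R19; destruct (Rlt_dec v (0 - lam)); [contradiction|].
        do 2 exec_step; apply reach_refl. }
  all: cbn [pc nreg rreg nread outs]; repeat split;
    try (intros i Hi; rewrite upd_neq by lia; reflexivity); rewrite upd_eq, ?R4, ?R5, ?R6, ?R19.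
  - rewrite abs_soft_above; auto.
  - rewrite abs_soft_below by lra; ring.
  - rewrite abs_soft_between by lra; ring.
Qed.

Lemma soft_threshold n sigma beta y t a e v c : level_at n sigma beta y t a e 80 v c ->
  exists c', reach prog y c c' 4 /\
    level_at n sigma beta y t a e 87 (abs_soft (threshold sigma beta n) v) c'.
Proof.
  intros (Hpc & Hm & R12 & R19).
  pose proof Hm
    as (((_ & _ & _ & _ & _ & _ & _ & _ & _ & _ & _ & _ & _ & R4 & R5 & R6 & _) & _) & _).
  destruct (soft_threshold_exec y c _ v Hpc R4 R5 R6 R19) as (c1 & Hr & P & V & N & R & Er & Eo).
  exists c1; split; [exact Hr|]; split; [exact P|].
  split; [|split; [rewrite R by lia; exact R12 | exact V]].
  apply (level_mid_frame _ _ _ _ _ _ _ c); auto; intros i Hi;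
    [rewrite N; reflexivity | simpl in Hi; apply R; lia].
Qed.

Lemma level_record n sigma beta y t a e c :
  level_at n sigma beta y t a e 87
    (abs_soft (threshold sigma beta n) (last_block_coef y a t e)) c ->
  exists c', reach prog y c c' 7 /\ loop_inv n sigma beta y t a (S e) c'.
Proof.
  intros (Hpc & ((Hs & He & H4 & H6 & R7 & R8) & HC & H5 & H7 & HL) & R12 & R19).
  pose proof Hs as (_ & Hat & Htn & _ & _ & _ & _ & _ & _ & H12 & H13 & _).
  assert (Hlog : (e - 1 < Nat.log2_up (t - a + 1))%nat) by (apply Nat.log2_up_lt_pow2; lia).
  assert (HlogL : (Nat.log2_up (t - a + 1) <= t - a + 1)%nat)
    by (apply Nat.log2_up_le_pow2; [lia|]; apply Nat.lt_le_incl, Nat.pow_gt_lin_r; lia).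
  assert (HS : sumR (partial_part y (threshold sigma beta n) a t) 1 e
               = sumR (partial_part y (threshold sigma beta n) a t) 1 (e - 1)
                 + partial_part y (threshold sigma beta n) a t e).
  { replace e with (S (e - 1)) at 1 by lia; rewrite sumR_S_r.
    replace (1 + (e - 1))%nat with e by lia; reflexivity. }
  destruct c as [p N Rr r o]; cbn [pc nreg rreg nread outs] in *; subst p.
  destruct (Nat.eqb_spec ((t - a + 1) mod 2 ^ e) 0) as [Hm|Hm]; eexists; split.
  1: do 2 exec_step; take_branch; do 4 exec_step; apply reach_refl.
  2: do 2 exec_step; take_branch; do 5 exec_step; apply reach_refl.
  all: split; [reflexivity|]; split; [split; [|split; [lia|]] | split; [|cbn [nreg]; lia]].
  all: try (apply (step_regs_frame _ _ _ _ _ _ _ _ Hs); [reflexivity|reflexivity|..];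
            agree_on_regs).
  all: try (apply (level_counters_ext _ _ N); [agree_on_regs|exact HC]).
  all: cbn [nreg rreg]; rewrite Nat.sub_succ, Nat.sub_0_r.
  all: split; [rewrite upd_neq, upd_eq by lia; lia | split; [rewrite upd_eq; lia|]].
  - destruct (level_step_complete y (threshold sigma beta n) n a t e) as [E7 E8]; try lia.
    rewrite upd_eq, upd_neq, upd_neq, E7, R7, R8, R19, R12, HS, E8 by lia.
    split; [reflexivity|ring].
  - destruct (level_step_partial y (threshold sigma beta n) n a t e) as [E7 E8]; try lia.
    rewrite upd_neq, upd_neq, upd_eq, E7, R7, R8, R19, R12, HS, E8 by lia.
    split; reflexivity.
Qed.

Lemma loop_exit n sigma beta y t a e c : 0 < sigma -> loop_inv n sigma beta y t a e c ->
  (t - a + 1 <= 2 ^ (e - 1))%nat ->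
  exists c', reach prog y c c' 12 /\ step_inv n sigma beta y (S t) c'.
Proof.
  intros Hsig (Hpc & (Hs & He & H4 & H6 & R7 & R8) & HC & Hlog) HL.
  pose proof Hs as (Ha & Hat & Htn & Hr & Ho & H0 & H1 & H2 & H3 & H12 & H13 & _
                    & R1 & R4 & R5 & R6 & R9 & R11 & _ & HP).
  destruct (bin_start_S sigma beta n y t a) as [Hst Hpr]; [lia|auto|].
  rewrite (arrows_test_levels sigma beta n y a t e) in Hst, Hpr by assumption.
  set (X := sigma / sqrt (INR (2 ^ (e - 1)))) in *.
  set (Y := complete_total_mixed y (threshold sigma beta n) n a (t - a + 1) e
            + sumR (partial_part y (threshold sigma beta n) a t) 1 (e - 1)) in *.
  destruct c as [p N Rr r o]; cbn [pc nreg rreg nread outs] in *; subst p.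
  assert (Hsum : Rr 7%nat + Rr 8%nat = Y) by (rewrite R7, R8; reflexivity).
  destruct (Rlt_dec X Y) as [Hlt|Hge]; eexists; split.
  1: { exec_step; take_branch; do 5 exec_step; rewrite R1, H4, Hsum; fold X; exec_step.
       destruct (Rlt_dec X Y); [|contradiction]; do 5 exec_step; apply reach_refl. }
  2: { exec_step; take_branch; do 5 exec_step; rewrite R1, H4, Hsum; fold X; exec_step.
       destruct (Rlt_dec X Y); [contradiction|]; do 4 exec_step; apply reach_refl. }
  all: unfold step_inv; cbv zeta; cbn [pc nreg rreg nread outs];
    rewrite Nat.sub_succ, Nat.sub_0_r, Hst.
  all: repeat split; try assumption; try lia; cbn [upd Nat.eqb].
  all: rewrite ?H0, ?H1, ?H2, ?H12, ?H13, ?R1, ?R4, ?R5, ?R6, ?R9, ?R11, ?Hpr; try ring; try lia.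
  - rewrite Nat.sub_diag, complete_total_0; ring.
  - intros e' He' HL'; rewrite upd_neq by lia.
    replace (S t - a + 1)%nat with (t - a + 1 + 1)%nat in * by lia.
    apply (level_counters_close _ _ _ He HL HC); lia.
  - rewrite R7, complete_total_mixed_done by lia; f_equal; lia.
Qed.

Lemma level_step n sigma beta y t a e c : loop_inv n sigma beta y t a e c ->
  (2 ^ (e - 1) < t - a + 1)%nat ->
  exists c', reach prog y c c' 55 /\ loop_inv n sigma beta y t a (S e) c'.
Proof.
  intros H HL.
  destruct (counter_update _ _ _ _ _ _ _ _ H HL) as (c1 & R1 & M1).
  destruct (coef_compute _ _ _ _ _ _ _ _ M1) as (c2 & R2 & M2).
  destruct (soft_threshold _ _ _ _ _ _ _ _ _ M2) as (c3 & R3 & M3).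
  destruct (level_record _ _ _ _ _ _ _ _ M3) as (c4 & R4 & M4).
  exists c4; split; [|exact M4].
  exact (reach_trans _ _ _ _ _ _ _ (reach_trans _ _ _ _ _ _ _
           (reach_trans _ _ _ _ _ _ _ R1 R2) R3) R4).
Qed.

Lemma level_loop n sigma beta y t a : 0 < sigma -> forall d e c,
  loop_inv n sigma beta y t a e c -> (Nat.log2_up (t - a + 1) + 1 - e = d)%nat ->
  exists c', reach prog y c c' (55 * d + 12) /\ step_inv n sigma beta y (S t) c'.
Proof.
  intros Hsig d; induction d as [|d IH]; intros e c H Hd;
    destruct (Nat.lt_ge_cases (2 ^ (e - 1)) (t - a + 1)) as [HL|HL].
  - exfalso; pose proof H as (_ & (_ & He & _) & _).
    assert (e - 1 < Nat.log2_up (t - a + 1))%nat by (apply Nat.log2_up_lt_pow2; lia); lia.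
  - exact (loop_exit _ _ _ _ _ _ _ _ Hsig H HL).
  - destruct (level_step _ _ _ _ _ _ _ _ H HL) as (c1 & R1 & M1).
    destruct (IH (S e) c1 M1) as (c2 & R2 & M2); [lia|].
    exists c2; split; [|exact M2].
    replace (55 * S d + 12)%nat with (55 + (55 * d + 12))%nat by lia.
    exact (reach_trans _ _ _ _ _ _ _ R1 R2).
  - destruct (loop_exit _ _ _ _ _ _ _ _ Hsig H HL) as (c1 & R1 & M1).
    exists c1; split; [|exact M1]; apply (reach_mono _ _ _ _ 12); [lia|exact R1].
Qed.

Definition step_cost (n : nat) : nat := 37 + 55 * (Nat.log2_up n + 1).

Lemma step_correct n sigma beta y t c : 0 < sigma -> step_inv n sigma beta y t c ->
  (t <= n)%nat ->
  exists c', reach prog y c c' (step_cost n) /\ step_inv n sigma beta y (S t) c'.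
Proof.
  intros Hsig H Ht.
  destruct (loop_enter _ _ _ _ _ _ H Ht) as (c1 & R1 & M1).
  pose proof M1 as (_ & ((_ & Hat & _) & _) & _).
  destruct (level_loop _ _ _ _ _ _ Hsig _ 1 c1 M1 eq_refl) as (c2 & R2 & M2).
  exists c2; split; [|exact M2].
  assert (Nat.log2_up (t - bin_start sigma beta n y (t - 1) + 1) <= Nat.log2_up n)%nat
    by (apply Nat.log2_up_le_mono; lia).
  refine (reach_mono _ _ _ _ _ _ _ (reach_trans _ _ _ _ _ _ _ R1 R2)); unfold step_cost; lia.
Qed.

Lemma steps_correct n sigma beta y : 0 < sigma -> forall k t c,
  step_inv n sigma beta y t c -> (t + k = S n)%nat ->
  exists c', reach prog y c c' (k * step_cost n) /\ step_inv n sigma beta y (S n) c'.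
Proof.
  intros Hsig k; induction k as [|k IH]; intros t c H Hk.
  - exists c; split; [apply reach_refl|]; replace (S n) with t by lia; exact H.
  - destruct (step_correct _ _ _ _ _ _ Hsig H) as (c1 & R1 & M1); [lia|].
    destruct (IH (S t) c1 M1) as (c2 & R2 & M2); [lia|].
    exists c2; split; [exact (reach_trans _ _ _ _ _ _ _ R1 R2)|exact M2].
Qed.

Theorem proposition3 :
  exists (P : list instr) (C n0 : nat),
    forall (n : nat) (sigma delta beta : R) (y : nat -> R),
      (n0 <= n)%nat -> 0 < sigma -> 0 < delta <= 1 -> 24 < beta ->
      exists fin : config,
        run P y (S (C * n * Nat.log2 n)) (init_config n sigma delta beta) = Some fin /\
        map snd (outs fin) = arrows_predictions sigma beta n y /\
        (forall (i : nat) (o : nat * R), nth_error (outs fin) i = Some o -> (fst o <= i)%nat).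
Proof.
  exists prog, 300%nat, 2%nat.
  intros n sigma delta beta y Hn Hsig _ _.
  destruct (init_step_inv n sigma delta beta y) as (c1 & R1 & M1).
  destruct (steps_correct n sigma beta y Hsig n 1 c1 M1 ltac:(lia)) as (c2 & R2 & M2).
  destruct (step_inv_halt _ _ _ _ _ M2) as (c3 & R3 & Hhalt & Ho).
  exists c3; split; [|split].
  - apply (run_of_reach _ _ _ _ _ _ (reach_trans _ _ _ _ _ _ _ (reach_trans _ _ _ _ _ _ _ R1 R2) R3)
             Hhalt).
    pose proof (Nat.log2_pos n ltac:(lia)); pose proof (Nat.le_log2_up_succ_log2 n).
    unfold step_cost; nia.
  - rewrite Ho; unfold emitted, arrows_predictions; rewrite map_map; reflexivity.
  - intros i o Hi; rewrite Ho in Hi; unfold emitted in Hi.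
    rewrite nth_error_map, nth_error_seq in Hi.
    destruct (Nat.ltb i n); [|discriminate]; injection Hi as <-; simpl; lia.
Qed.
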